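(* Let $R$ be a ring with identity and $a\in R$. Then: (i) there exists a positive integer $n$ such that $a$ is left $(a^n,1)$-invertible if and only if $a$ is left $\pi$-regular; (ii) there exists a positive integer $n$ such that $a$ is right $(1,a^n)$-invertible if and only if $a$ is right $\pi$-regular; (iii) $a$ is strongly $\pi$-regular (equivalently, Drazin invertible) if and only if there exists a positive integer $n$ such that $a$ is left $(a^n,1)$-invertible and right $(1,a^n)$-invertible.
   Context: For $x\in R$: $xR=\{xr:r\in R\}$, $Rx=\{rx:r\in R\}$. For $a,b,c\in R$, $a$ is left $(b,c)$-invertible if there is $y$ with $Ry\subseteq Rc$ and $yab=b$; right $(b,c)$-invertible if there is $y$ with $yR\subseteq bR$ and $cay=c$. The element $a$ is left (resp. right) $\pi$-regular if there exist $x\in R$ and a positive integer $n$ with $a^n=xa^{n+1}$ (resp. $a^n=a^{n+1}x$); it is strongly $\pi$-regular if it is both left and right $\pi$-regular. *)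

From mathcomp Require Import all_boot all_algebra.
Set Implicit Arguments. Unset Strict Implicit. Unset Printing Implicit Defensive.
Import GRing.Theory.
Local Open Scope ring_scope.

Definition left_principal_sub (R : pzRingType) (x c : R) : Prop :=
  forall r : R, exists s : R, r * x = s * c.
Definition right_principal_sub (R : pzRingType) (x b : R) : Prop :=
  forall r : R, exists s : R, x * r = b * s.

Definition left_bc_invertible (R : pzRingType) (a b c : R) : Prop :=
  exists y : R, left_principal_sub y c /\ y * a * b = b.
Definition right_bc_invertible (R : pzRingType) (a b c : R) : Prop :=
  exists y : R, right_principal_sub y b /\ c * a * y = c.

Definition left_pi_regular (R : pzRingType) (a : R) : Prop :=
  exists (x : R) (n : nat), (0 < n)%N /\ a ^+ n = x * a ^+ n.+1.
Definition right_pi_regular (R : pzRingType) (a : R) : Prop :=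
  exists (x : R) (n : nat), (0 < n)%N /\ a ^+ n = a ^+ n.+1 * x.
Definition strongly_pi_regular (R : pzRingType) (a : R) : Prop :=
  left_pi_regular a /\ right_pi_regular a.

From mathcomp Require Import all_boot all_algebra.
Local Open Scope ring_scope.
Import GRing.Theory.

(* Since R 1 = R and 1 R = R, the ideal conditions are vacuous when c = 1
   (resp. b = 1), and (b,c)-invertibility reduces to a one-sided equation:
   the pi-regularity equation of index n.  The only remaining point in (iii)
   is to use a common index, which works because a pi-regularity equation of
   index n persists at every larger index. *)

Lemma left_principal_sub1 (R : pzRingType) (x : R) : left_principal_sub x 1.
Proof. by move=> r; exists (r * x); rewrite mulr1. Qed.

Lemma right_principal_sub1 (R : pzRingType) (x : R) : right_principal_sub x 1.
Proof. by move=> r; exists (x * r); rewrite mul1r. Qed.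

Lemma left_bc_invertible_exp1P (R : pzRingType) (a : R) (n : nat) :
  left_bc_invertible a (a ^+ n) 1 <-> exists x, a ^+ n = x * a ^+ n.+1.
Proof.
split=> [[y [_ yaan]] | [x anE]].
  by exists y; rewrite -{1}yaan -mulrA -exprS.
by exists x; split; [exact: left_principal_sub1 | rewrite -mulrA -exprS -anE].
Qed.

Lemma right_bc_invertible_1expP (R : pzRingType) (a : R) (n : nat) :
  right_bc_invertible a 1 (a ^+ n) <-> exists x, a ^+ n = a ^+ n.+1 * x.
Proof.
split=> [[y [_ anay]] | [x anE]].
  by exists y; rewrite -{1}anay -exprSr.
by exists x; split; [exact: right_principal_sub1 | rewrite -exprSr -anE].
Qed.

Lemma left_pi_regular_eq_addn (R : pzRingType) (a x : R) (n k : nat) :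
  a ^+ n = x * a ^+ n.+1 -> a ^+ (n + k) = x * a ^+ (n + k).+1.
Proof. by move=> anE; rewrite exprD anE -mulrA -exprD addSn. Qed.

Lemma right_pi_regular_eq_addn (R : pzRingType) (a x : R) (n k : nat) :
  a ^+ n = a ^+ n.+1 * x -> a ^+ (k + n) = a ^+ (k + n).+1 * x.
Proof. by move=> anE; rewrite exprD anE mulrA -exprD addnS. Qed.

Lemma left_pi_regularP (R : pzRingType) (a : R) :
  (exists n : nat, (0 < n)%N /\ left_bc_invertible a (a ^+ n) 1)
  <-> left_pi_regular a.
Proof.
split=> [[n [n_gt0 /left_bc_invertible_exp1P [x anE]]] | [x [n [n_gt0 anE]]]].
  by exists x, n.
by exists n; split=> //; apply/left_bc_invertible_exp1P; exists x.
Qed.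

Lemma right_pi_regularP (R : pzRingType) (a : R) :
  (exists n : nat, (0 < n)%N /\ right_bc_invertible a 1 (a ^+ n))
  <-> right_pi_regular a.
Proof.
split=> [[n [n_gt0 /right_bc_invertible_1expP [x anE]]] | [x [n [n_gt0 anE]]]].
  by exists x, n.
by exists n; split=> //; apply/right_bc_invertible_1expP; exists x.
Qed.

Theorem proposition2p18 (R : pzRingType) (a : R) :
  ((exists n : nat, (0 < n)%N /\ left_bc_invertible a (a ^+ n) 1)
     <-> left_pi_regular a)
  /\ ((exists n : nat, (0 < n)%N /\ right_bc_invertible a 1 (a ^+ n))
     <-> right_pi_regular a)
  /\ (strongly_pi_regular a <->
      exists n : nat, (0 < n)%N /\ left_bc_invertible a (a ^+ n) 1
                               /\ right_bc_invertible a 1 (a ^+ n)).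
Proof.
split; first exact: left_pi_regularP.
split; first exact: right_pi_regularP.
split.
  move=> [[x [n [n_gt0 anE]]] [y [m [_ amE]]]].
  exists (n + m)%N; split; first by rewrite addn_gt0 n_gt0.
  split; [apply/left_bc_invertible_exp1P | apply/right_bc_invertible_1expP].
    by exists x; exact: left_pi_regular_eq_addn.
  by exists y; exact: right_pi_regular_eq_addn.
move=> [n [n_gt0 [left_inv right_inv]]]; split.
  by apply/left_pi_regularP; exists n.
by apply/right_pi_regularP; exists n.
Qed.
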